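(* Assume the following setting. $v_0,w_0\in\mathrm{Vect}^*S^2$ are orbitally topologically equivalent via a homeomorphism $\hat H\colon S^2\to S^2$; $V=\{v_\varepsilon\}_{\varepsilon\in(B,0)}$ and $W=\{w_\varepsilon\}_{\varepsilon\in(B',0)}$ are smooth local families in $\mathrm{Vect}^*S^2$ unfolding $v_0,w_0$; there is a neighborhood $U_0$ of $LBS(V)$ and a map $\mathbf H\colon(B,0)\times U_0\to(B',0)\times S^2$, $\mathbf H(\varepsilon,x)=(h(\varepsilon),H_\varepsilon(x))$, $h(0)=0$, which is a moderate equivalence of $V$ and $W$ in neighborhoods of $LBS(V)$, $LBS(W)$, with $\hat H|_{U_0}=H_0$. Then for each neighborhood $\tilde U^+$ of $LBS(W)$ there exists a small open neighborhood $U$ of $LBS(V)$ such that $H_\varepsilon(U)\subset\tilde U^+$ for all sufficiently small $\varepsilon$.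
   Context: $\mathrm{Vect}^*S^2$: $C^\infty$ vector fields on $S^2$ with isolated singular points each satisfying a Lojasiewicz inequality, and finitely many cycles. Orbital topological equivalence: a homeomorphism sending orbits to orbits preserving time direction. A separatrix is a phase curve containing one of the two bounding curves of a hyperbolic sector of a singular point; $S(v)$ = union of singular points, limit cycles, separatrices of $v$. A nest is a maximal set of nested limit cycles with no singular points between them; a limit cycle is semi-stable if its Poincaré map in a suitable transversal coordinate satisfies $P(0)=0$, $P(x)>x$ for $x\neq0$. A limit cycle is non-interesting if its nest contains an attracting or repelling limit cycle, or all cycles in its nest are semi-stable and inside the innermost or outside the outermost cycle there is only one singular point, which is hyperbolic. An $\alpha$- (resp. $\omega$-) limit set of a nonsingular point is non-interesting if it is a hyperbolic repelling (resp. attracting) singular point or a non-interesting limit cycle, otherwise interesting. $ELBS(v)$ = union of non-hyperbolic singular points, non-hyperbolic limit cycles, and the closure of the set of nonsingular points whose $\alpha$- and $\omega$-limit sets are both interesting. A smooth local family is the germ at $\varepsilon=0$ of a smooth family of vector fields on $S^2$ parametrized by an open ball in $\mathbb R^n$. $\mathrm{Sing}\,V,\mathrm{Per}\,V,\mathrm{Sep}\,V$ are unions over $\varepsilon$ of $\{\varepsilon\}\times$(singular points, limit cycles, separatrices of $v_\varepsilon$); $\{\varepsilon=0\}\times S^2\cong S^2$. $LBS(V)=ELBS(v_0)\cap\big(\mathrm{Sing}\,v_0\cup((\overline{\mathrm{Per}\,V}\cup\overline{\mathrm{Sep}\,V})\cap\{\varepsilon=0\})\big)$. Moderate equivalence in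 neighborhoods of $Z_1=LBS(V)$, $Z_2=LBS(W)$: (1) $Z_1$ is $v_0$-invariant, $Z_2$ is $w_0$-invariant; (2) $h$ is a homeomorphism, $h(0)=0$, and each $H_\varepsilon$ conjugates $v_\varepsilon|_{U_0}$ and $w_{h(\varepsilon)}|_{H_\varepsilon(U_0)}$; (3) $H_0(Z_1)=Z_2$; (4) for every neighborhood $N$ of $\{0\}\times Z_1$, $\mathbf H(N)$ contains a neighborhood of $\{0\}\times Z_2$, and likewise for $\mathbf H^{-1}$; (5) $\mathbf H$ is continuous in $(\varepsilon,x)$ on the intersection of its domain with $S(v_0)\cup\partial((\overline{\mathrm{Per}\,V}\cup\overline{\mathrm{Sep}\,V})\cap\{\varepsilon=0\})$, and $\mathbf H^{-1}$ is continuous on the intersection of its domain with $S(w_0)\cup\partial((\overline{\mathrm{Per}\,W}\cup\overline{\mathrm{Sep}\,W})\cap\{\varepsilon=0\})$. *)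

From HB Require Import structures.
From mathcomp Require Import all_boot all_order all_algebra.
From mathcomp Require Import all_classical all_reals all_analysis.
Set Implicit Arguments. Unset Strict Implicit. Unset Printing Implicit Defensive.
Import Order.TTheory GRing.Theory Num.Theory.
Import numFieldNormedType.Exports.
Local Open Scope classical_set_scope.
Local Open Scope ring_scope.

Section Defs.
Context {R : realType}.
Local Notation P3 := 'rV[R]_3.
Implicit Types (F G : P3 -> P3).

Definition dot (x y : P3) : R := (x *m y^T) 0 0.
Definition S2 : set P3 := [set x | dot x x = 1].
Definition tangent (x u : P3) : Prop := dot u x = 0.

Definition cont_at {T U : pseudoMetricType R} (D : set T) (f : T -> U) (p : T) :=
  forall e : R, 0 < e -> exists d : R, 0 < d /\
    forall q, D q -> ball p d q -> ball (f p) e (f q).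
Definition cont_within {T U : pseudoMetricType R} (D : set T) (f : T -> U) :=
  forall p, D p -> cont_at D f p.
(* continuity, at f p, of the inverse of f (f injective on D), as a map on f @` D *)
Definition invcont_at {T U : pseudoMetricType R} (D : set T) (f : T -> U) (p : T) :=
  forall e : R, 0 < e -> exists d : R, 0 < d /\
    forall q, D q -> ball (f p) d (f q) -> ball p e q.
(* f is a homeomorphism of D onto its image f @` D *)
Definition homeo_onto {T U : pseudoMetricType R} (D : set T) (f : T -> U) :=
  [/\ cont_within D f,
      (forall x y, D x -> D y -> f x = f y -> x = y) &
      (forall p, D p -> invcont_at D f p)].

Fixpoint dirD {U V : normedModType R} (vs : seq U) (f : U -> V) : U -> V :=
  if vs is v :: vs' then 'D_v (dirD vs' f) else f.
Definition smooth_on {U V : normedModType R} (A : set U) (f : U -> V) :=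
  forall (vs : seq U) (v x : U), A x ->
    derivable (dirD vs f) x v /\ {for x, continuous (dirD vs f)}.

(* ---------- vector fields on S^2 (given by a smooth ambient extension) ---------- *)
Definition is_vf (F : P3 -> P3) :=
  smooth_on setT F /\ forall x, S2 x -> tangent x (F x).

Definition is_sol (F : P3 -> P3) (g : R -> P3) :=
  forall t : R, [/\ S2 (g t), derivable g t 1 & 'D_1 g t = F (g t)].

Definition flows_to F (x : P3) (t : R) (y : P3) :=
  exists g, [/\ is_sol F g, g 0 = x & g t = y].

Definition reach_in F (A : set P3) (x y : P3) :=
  exists g (t : R), [/\ is_sol F g, g 0 = x, 0 <= t, g t = y &
                       forall s, 0 <= s <= t -> A (g s)].

Definition orbit F (x : P3) : set P3 :=
  [set y | exists g (t : R), [/\ is_sol F g, g 0 = x & g t = y]].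

Definition sing F (x : P3) := S2 x /\ F x = 0.

Definition isolated_sing F x :=
  sing F x /\ exists e : R, 0 < e /\ forall y, sing F y -> `|y - x| < e -> y = x.

Definition lojasiewicz F (x : P3) :=
  exists (c : R) (k : nat) (e : R), [/\ 0 < c, 0 < e &
    forall y, S2 y -> `|y - x| < e -> c * `|y - x| ^+ k <= `|F y|].

(* a cycle (closed nonsingular orbit), as the image of one period *)
Definition is_cycle F (C : set P3) :=
  exists g (T : R), [/\ is_sol F g, 0 < T, F (g 0) != 0, g T = g 0 &
                       C = g @` [set t | 0 <= t <= T]].

Definition limit_cycle F (C : set P3) :=
  is_cycle F C /\ exists O : set P3, [/\ open O, C `<=` O &
     forall C', is_cycle F C' -> C' `<=` O -> C' = C].

Definition Vect_star (F : P3 -> P3) :=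
  [/\ is_vf F,
      (forall x, sing F x -> isolated_sing F x /\ lojasiewicz F x) &
      finite_set (is_cycle F)].

Definition lin F (x u : P3) : P3 := 'D_u F x.
(* a + i b is an eigenvalue of the linearization on the tangent plane T_x S^2,
   i.e. of its complexification: L(u + i w) = (a + i b)(u + i w) *)
Definition eigval F (x : P3) (a b : R) :=
  exists u w : P3, [/\ tangent x u, tangent x w, (u != 0 \/ w != 0),
     lin F x u = a *: u - b *: w & lin F x w = b *: u + a *: w].
Definition hyp_sing F x := sing F x /\ forall a b, eigval F x a b -> a != 0.
Definition hyp_repelling F x := sing F x /\ forall a b, eigval F x a b -> 0 < a.
Definition hyp_attracting F x := sing F x /\ forall a b, eigval F x a b -> a < 0.

(* sig : (-e,e) -> S^2 is a C^1 transversal through sig 0 in C, and P : (-e0,e0) -> (-e,e)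
   is the first return map along sig *)
Definition poincare F (C : set P3) (sig : R -> P3) (e e0 : R) (P : R -> R) :=
  [/\ 0 < e0 <= e, C (sig 0) /\ P 0 = 0,
      (forall s, `|s| < e -> [/\ S2 (sig s), derivable sig s 1 &
          forall a b : R, a *: 'D_1 sig s + b *: F (sig s) = 0 -> a = 0 /\ b = 0]),
      (forall s s', `|s| < e -> `|s'| < e -> sig s = sig s' -> s = s') &
      (forall s, `|s| < e0 -> `|P s| < e /\
         exists tau : R, [/\ 0 < tau, flows_to F (sig s) tau (sig (P s)) &
           forall t s', 0 < t < tau -> `|s'| < e -> ~ flows_to F (sig s) t (sig s')])].

Definition hyp_cycle F C :=
  exists sig e e0 P, [/\ poincare F C sig e e0 P, derivable P 0 1 & 'D_1 P 0 != 1].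

Definition semistable F C :=
  exists sig e e0 P, poincare F C sig e e0 P /\
     forall s : R, 0 < `|s| < e0 -> s < P s.

Definition omega_lim F (x : P3) : set P3 :=
  [set y | exists g, [/\ is_sol F g, g 0 = x &
     forall T e : R, 0 < e -> exists t, T < t /\ `|g t - y| < e]].
Definition alpha_lim F (x : P3) : set P3 :=
  [set y | exists g, [/\ is_sol F g, g 0 = x &
     forall T e : R, 0 < e -> exists t, t < T /\ `|g t - y| < e]].

Definition attracting_cycle F C :=
  limit_cycle F C /\ exists O : set P3, [/\ open O, C `<=` O &
     forall x, S2 x -> O x -> omega_lim F x = C].
Definition repelling_cycle F C :=
  limit_cycle F C /\ exists O : set P3, [/\ open O, C `<=` O &
     forall x, S2 x -> O x -> alpha_lim F x = C].

Definition between (C1 C2 : set P3) (p : P3) :=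
  [/\ S2 p, ~ (C1 `|` C2) p,
      closure (connected_component (S2 `\` (C1 `|` C2)) p) `&` C1 !=set0 &
      closure (connected_component (S2 `\` (C1 `|` C2)) p) `&` C2 !=set0].

Definition in_nest F (C C' : set P3) :=
  limit_cycle F C' /\ (C' = C \/ forall p, between C C' p -> ~ sing F p).

(* the region inside the innermost / outside the outermost cycle of the nest of C
   contains exactly one singular point, which is hyperbolic *)
Definition end_region_one_hyp F (C : set P3) :=
  let Un := \bigcup_(C' in in_nest F C) C' in
  exists q, [/\ (S2 `\` Un) q,
     (exists C1, [/\ in_nest F C C1,
         closure (connected_component (S2 `\` Un) q) `&` C1 !=set0 &
         forall C2, in_nest F C C2 ->
           closure (connected_component (S2 `\` Un) q) `&` C2 !=set0 -> C2 = C1]) &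
     exists p, [/\ connected_component (S2 `\` Un) q p, hyp_sing F p &
        forall p', sing F p' -> connected_component (S2 `\` Un) q p' -> p' = p]].

Definition noninteresting_cycle F C :=
  limit_cycle F C /\
  ((exists C', in_nest F C C' /\ (attracting_cycle F C' \/ repelling_cycle F C')) \/
   ((forall C', in_nest F C C' -> semistable F C') /\ end_region_one_hyp F C)).

Definition interesting_alpha F x :=
  ~ ((exists p, hyp_repelling F p /\ alpha_lim F x = [set p]) \/
     (exists C, noninteresting_cycle F C /\ alpha_lim F x = C)).
Definition interesting_omega F x :=
  ~ ((exists p, hyp_attracting F p /\ omega_lim F x = [set p]) \/
     (exists C, noninteresting_cycle F C /\ omega_lim F x = C)).

Definition ELBS F : set P3 :=
  [set p | sing F p /\ ~ hyp_sing F p] `|`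
  [set p | exists C, [/\ limit_cycle F C, ~ hyp_cycle F C & C p]] `|`
  closure [set x | [/\ S2 x, F x != 0, interesting_alpha F x & interesting_omega F x]].

Definition Qsq : set (R * R) := [set q | 0 <= q.1 <= 1 /\ 0 <= q.2 <= 1].
(* orbit relation of the model saddle (a' = a, b' = -b) restricted to [0,1]^2 *)
Definition model_reach (q q' : R * R) :=
  [/\ q.1 * q.2 = q'.1 * q'.2, q.1 <= q'.1, q'.2 <= q.2,
      (q.1 == 0) = (q'.1 == 0) & (q.2 == 0) = (q'.2 == 0)].
(* phi embeds the model hyperbolic sector, orbit arcs and time direction preserved *)
Definition hyp_sector F (p : P3) (phi : R * R -> P3) :=
  [/\ sing F p /\ phi (0, 0) = p,
      cont_within Qsq phi,
      (forall q, Qsq q -> S2 (phi q)),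
      (forall q q', Qsq q -> Qsq q' -> phi q = phi q' -> q = q') &
      forall q q', Qsq q -> Qsq q' ->
        (model_reach q q' <-> reach_in F (phi @` Qsq) (phi q) (phi q'))].
(* a separatrix: phase curve containing one of the two bounding curves
   phi({0} x (0,1]) or phi((0,1] x {0}) of a hyperbolic sector *)
Definition separatrix F (S : set P3) :=
  exists p phi, hyp_sector F p phi /\
     (S = orbit F (phi (0, 1)) \/ S = orbit F (phi (1, 0))).

Definition Sv F : set P3 :=
  sing F `|` (\bigcup_(C in limit_cycle F) C) `|` (\bigcup_(S in separatrix F) S).

Section Family.
Variable n : nat.
Implicit Types (V : 'rV[R]_n -> P3 -> P3) (r : R).

Definition smooth_family r V :=
  [/\ 0 < r,
      smooth_on [set p : 'rV[R]_n * P3 | ball 0 r p.1] (fun p => V p.1 p.2) &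
      forall e, ball 0 r e -> Vect_star (V e)].

Definition SingF r V : set ('rV[R]_n * P3) := [set p | ball 0 r p.1 /\ sing (V p.1) p.2].
Definition PerF r V : set ('rV[R]_n * P3) :=
  [set p | ball 0 r p.1 /\ exists C, limit_cycle (V p.1) C /\ C p.2].
Definition SepF r V : set ('rV[R]_n * P3) :=
  [set p | ball 0 r p.1 /\ exists S, separatrix (V p.1) S /\ S p.2].

Definition slice0 (A : set ('rV[R]_n * P3)) : set P3 := [set x | A (0, x)].

Definition KF r V : set P3 := slice0 (closure (PerF r V) `|` closure (SepF r V)).

Definition LBS r V : set P3 := ELBS (V 0) `&` (sing (V 0) `|` KF r V).

Definition zeroX (Z : set P3) : set ('rV[R]_n * P3) := [set p | p.1 = 0 /\ Z p.2].
End Family.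

Definition bdS2 (A : set P3) : set P3 :=
  [set x | closure A x /\ ~ (exists O : set P3, [/\ open O, O x & O `&` S2 `<=` A])].

Definition nbhdS2 (Z U : set P3) :=
  U `<=` S2 /\ exists O : set P3, [/\ open O, Z `<=` O & O `&` S2 `<=` U].
Definition openS2 (U : set P3) := exists O : set P3, open O /\ U = O `&` S2.

Definition orb_equiv (F G : P3 -> P3) (Hh : P3 -> P3) :=
  [/\ homeo_onto S2 Hh, Hh @` S2 = S2 &
      forall x y, S2 x -> S2 y -> (reach_in F S2 x y <-> reach_in G S2 (Hh x) (Hh y))].

(* moderate equivalence of V and W in neighborhoods of LBS(V), LBS(W), with
   bold H (eps, x) = (h eps, H eps x) defined on ball(0,r) x U0 *)
Definition moderate_equiv (n n' : nat) (r r' : R)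
    (V : 'rV[R]_n -> P3 -> P3) (W : 'rV[R]_n' -> P3 -> P3) (U0 : set P3)
    (h : 'rV[R]_n -> 'rV[R]_n') (H : 'rV[R]_n -> P3 -> P3) :=
  let Z1 := LBS r V in let Z2 := LBS r' W in
  let D1 := [set p : 'rV[R]_n * P3 | ball 0 r p.1 /\ U0 p.2] in
  let Hb := fun p : 'rV[R]_n * P3 => (h p.1, H p.1 p.2) in
  [/\ (* h is a homeomorphism of germs (B,0) -> (B',0) *)
      [/\ homeo_onto (ball 0 r) h, h 0 = 0, open (h @` ball 0 r) &
          h @` ball 0 r `<=` ball 0 r'],
      (forall x, Z1 x -> orbit (V 0) x `<=` Z1) /\ (forall x, Z2 x -> orbit (W 0) x `<=` Z2),
      (forall e, ball 0 r e ->
         [/\ homeo_onto U0 (H e), (forall x, U0 x -> S2 (H e x)) &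
             forall x y, U0 x -> U0 y ->
               (reach_in (V e) U0 x y <-> reach_in (W (h e)) (H e @` U0) (H e x) (H e y))]),
      H 0 @` Z1 = Z2 /\
      ((forall N : set ('rV[R]_n * P3),
         (exists O : set ('rV[R]_n * P3), [/\ open O, zeroX Z1 `<=` O & O `&` [set p | S2 p.2] `<=` N]) ->
         exists O' : set ('rV[R]_n' * P3), [/\ open O', zeroX Z2 `<=` O' &
                      O' `&` [set q | S2 q.2] `<=` Hb @` (N `&` D1)]) /\
      (forall N' : set ('rV[R]_n' * P3),
         (exists O' : set ('rV[R]_n' * P3), [/\ open O', zeroX Z2 `<=` O' & O' `&` [set q | S2 q.2] `<=` N']) ->
         exists O : set ('rV[R]_n * P3), [/\ open O, zeroX Z1 `<=` O &
                      O `&` [set p | S2 p.2] `<=` [set p | D1 p /\ N' (Hb p)]])) &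
      (forall x, U0 x -> (Sv (V 0) `|` bdS2 (KF r V)) x -> cont_at D1 Hb (0, x)) /\
      (forall x, U0 x -> (Sv (W 0) `|` bdS2 (KF r' W)) (H 0 x) -> invcont_at D1 Hb (0, x))].

End Defs.

From HB Require Import structures.
From mathcomp Require Import all_boot all_order all_algebra.
From mathcomp Require Import all_classical all_reals all_analysis.
From mathcomp Require Import lra.
Set Implicit Arguments. Unset Strict Implicit. Unset Printing Implicit Defensive.
Import Order.TTheory GRing.Theory Num.Theory.
Import numFieldNormedType.Exports.
Local Open Scope classical_set_scope.
Local Open Scope ring_scope.

(* Condition (4) of moderate equivalence, applied to H^-1 and the neighbourhood
   R^n' x Ut of {0} x LBS(W), yields an open set N around {0} x LBS(V) whose
   points over S^2 are mapped by (eps, x) |-> H_eps x into Ut.  Since LBS(V) is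
   a closed subset of S^2, it is compact, so by the tube lemma N contains a
   uniform product ball(0, d) x (d-neighbourhood of LBS(V)); the trace of that
   neighbourhood on S^2 is the required U, and U lies in U0 because the domain
   of H does. *)

Section Topology.
Context {R : realType}.

Lemma closed_slice {T U : topologicalType} (A : set (T * U)) (a : T) :
  closed A -> closed [set x | A (a, x)].
Proof.
move=> clA; apply: (@preimage_closed _ _ (pair a)) => // x _.
by apply: cvg_pair; [exact: cvg_cst | exact: cvg_id].
Qed.

Lemma closed_subset_isolated {V : normedModType R} (A B : set V) :
  closed A -> (forall x, A x -> exists2 e : R, 0 < e &
                 forall y, A y -> `|y - x| < e -> y = x) ->
  B `<=` A -> closed B.
Proof.
move=> clA isoA BA p clBp.
have Ap : A p by apply: clA; exact: closureS clBp.
have [e e0 He] := isoA p Ap.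
have [q [Bq pq]] := clBp _ (nbhsx_ballx p _ e0).
suff <- : q = p by [].
by apply: He; [exact: BA | rewrite -ball_normE /ball_ /= distrC in pq].
Qed.

Lemma tube_ball {T U : pseudoMetricType R} (a : T) (K : set U) (O : set (T * U)) :
  compact K -> open O -> (forall x, K x -> O (a, x)) ->
  exists2 d : R, 0 < d &
    forall x e y, K x -> ball a d e -> ball x d y -> O (e, y).
Proof.
move=> cK oO KO.
pose P d x := forall e y, ball a d e -> ball x d y -> O (e, y).
have : \forall d \near 0^'+, K `<=` P d.
  apply: ((compact_near_coveringP K).1 cK R (0^'+) P) => x Kx.
  have /nbhs_ballP[eps eps0 Heps] : nbhs (a, x) O.
    by move: oO; rewrite openE; apply; exact: KO.
  have eps20 : 0 < eps / 2 by rewrite divr_gt0.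
  exists (ball x (eps / 2), [set d | d < eps / 2]).
    by split; [exact: nbhsx_ballx | exact: nbhs_right_lt].
  case=> x' d /= [xx' deps] e y ae x'y; apply: Heps; split => /=.
    by apply: le_ball ae; lra.
  by apply: le_ball (ball_triangle xx' x'y); lra.
case/(filter_ex \o filterI (nbhs_right_gt 0)) => d [d0 Hd].
by exists d => // x e y Kx; exact: Hd.
Qed.

End Topology.

Section Sphere.
Context {R : realType}.
Local Notation P3 := 'rV[R]_3.

Lemma dot_self_sum (x : P3) : dot x x = \sum_(j < 3) x ord0 j ^+ 2.
Proof. by rewrite /dot !mxE; apply: eq_bigr => j _; rewrite !mxE expr2. Qed.

Lemma continuous_dot_self : continuous (fun x : P3 => dot x x).
Proof.
have -> : (fun x : P3 => dot x x) = fun x : P3 => \sum_(j < 3) x ord0 j ^+ 2.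
  by apply: funext => x; rewrite dot_self_sum.
apply: (continuous_big add_continuous) => j _ x.
by apply: continuousM; exact: coord_continuous.
Qed.

Lemma closed_S2 : closed (@S2 R).
Proof.
have -> : @S2 R = (fun x : P3 => dot x x) @^-1` [set r | r = 1] by [].
apply: preimage_closed; last exact: closed_eq.
by move=> x _; exact: continuous_dot_self.
Qed.

Lemma S2_coord_le1 (x : P3) i : S2 x -> `|x ord0 i| <= 1.
Proof.
rewrite /S2 /= dot_self_sum => x1.
have : x ord0 i ^+ 2 <= 1.
  by rewrite -x1 (bigD1 i) //= lerDl sumr_ge0 // => j _; exact: sqr_ge0.
by rewrite -real_normK ?num_real // expr_le1.
Qed.

Lemma compact_S2 : compact (@S2 R).
Proof.
apply: (subclosed_compact closed_S2 (@rV_compact _ _ (fun=> `[(-1 : R), 1]%classic) _)).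
  by move=> _; exact: segment_compact.
by move=> x S2x i /=; rewrite in_itv /= -ler_norml; exact: S2_coord_le1.
Qed.

End Sphere.

Section VectorFields.
Context {R : realType}.
Local Notation P3 := 'rV[R]_3.
Implicit Types (F : P3 -> P3) (C : set P3).

Lemma continuous_vf F : is_vf F -> continuous F.
Proof. by case=> smF _ x; have [_] := smF [::] 0 x I. Qed.

Lemma closed_sing F : continuous F -> closed (sing F).
Proof.
move=> cF; have -> : sing F = S2 `&` F @^-1` [set 0] by [].
apply: closedI; first exact: closed_S2.
apply: preimage_closed; first by move=> x _; exact: cF.
exact: (accessible_closed_set1 (hausdorff_accessible (@norm_hausdorff R P3))).
Qed.

Lemma closed_nonhyp_sing F : continuous F ->
    (forall x, sing F x -> isolated_sing F x) ->
  closed [set p | sing F p /\ ~ hyp_sing F p].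
Proof.
move=> cF isoF.
apply: (@closed_subset_isolated R P3 (sing F)); [exact: closed_sing | | by move=> p []].
by move=> x /isoF[_ [e [e0 He]]]; exists e => // y /He; apply; rewrite distrC.
Qed.

Lemma cycle_sub_S2 F C : is_cycle F C -> C `<=` S2.
Proof. by case=> g [T [solg _ _ _ ->]] _ [t _ <-]; have [] := solg t. Qed.

Lemma compact_cycle F C : is_cycle F C -> compact C.
Proof.
case=> g [T [solg _ _ _ ->]]; apply: continuous_compact.
  apply: continuous_subspaceT => t; have [_ dg _] := solg t.
  exact: differentiable_continuous ((derivable1_diffP _ _).1 dg).
rewrite (_ : [set t | 0 <= t <= T] = `[0, T]%classic); first exact: segment_compact.
by apply/seteqP; split => t /=; rewrite in_itv.
Qed.

Lemma closed_nonhyp_limit_cycles F : finite_set (is_cycle F) ->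
  closed [set p | exists C, [/\ limit_cycle F C, ~ hyp_cycle F C & C p]].
Proof.
move=> finF.
have -> : [set p | exists C, [/\ limit_cycle F C, ~ hyp_cycle F C & C p]] =
    \bigcup_(C in [set C | limit_cycle F C /\ ~ hyp_cycle F C]) C.
  by apply/seteqP; split => p /= [C]; [case=> lC nhC Cp | case=> lC nhC Cp]; exists C.
apply: closed_bigcup => [|C [[cC _] _]].
  by apply: sub_finite_set finF => C [[]].
by apply: compact_closed; [exact: norm_hausdorff | exact: compact_cycle cC].
Qed.

Lemma closed_ELBS F : Vect_star F -> closed (ELBS F).
Proof.
case=> vfF singF finF; apply: closedU; last exact: closed_closure.
apply: closedU; last exact: closed_nonhyp_limit_cycles.
by apply: closed_nonhyp_sing; [exact: continuous_vf | move=> x /singF[]].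
Qed.

Lemma ELBS_sub_S2 F : ELBS F `<=` S2.
Proof.
move=> p [[[[S2p _] _] | [C [[cC _] _ Cp]]] | clp] //; first exact: cycle_sub_S2 cC _ Cp.
by apply: closed_S2; apply: closureS clp => q [].
Qed.

Lemma closed_KF n r (V : 'rV[R]_n -> P3 -> P3) : closed (KF r V).
Proof. by apply: closed_slice; apply: closedU; exact: closed_closure. Qed.

Lemma compact_LBS n r (V : 'rV[R]_n -> P3 -> P3) : Vect_star (V 0) -> compact (LBS r V).
Proof.
move=> vs0; apply: (subclosed_compact _ compact_S2); last by move=> p [/ELBS_sub_S2].
apply: closedI; first exact: closed_ELBS.
apply: closedU; last exact: closed_KF.
by apply: closed_sing; case: vs0 => vfV0 _ _; exact: continuous_vf.
Qed.

End VectorFields.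

Section Thickening.
Context {R : realType}.
Local Notation P3 := 'rV[R]_3.

Definition S2_thickening (K : set P3) (d : R) : set P3 :=
  [set y | S2 y /\ exists2 x, K x & ball x d y].

Lemma openS2_thickening K d : openS2 (S2_thickening K d).
Proof.
exists (\bigcup_(x in K) ball x d); split.
  by apply: bigcup_open => x _; exact: ball_open.
by apply/seteqP; split => y; [case=> S2y [x Kx dxy] | case=> [[x Kx dxy] S2y]];
  split => //; exists x.
Qed.

Lemma sub_S2_thickening K d : K `<=` S2 -> 0 < d -> K `<=` S2_thickening K d.
Proof. by move=> KS2 d0 x Kx; split; [exact: KS2 | exists x => //; exact: ballxx]. Qed.

End Thickening.

Lemma moderate_equiv_pullback {R : realType} n n' (r r' : R)
    (V : 'rV[R]_n -> 'rV[R]_3 -> 'rV[R]_3) (W : 'rV[R]_n' -> 'rV[R]_3 -> 'rV[R]_3)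
    (U0 Ut : set 'rV[R]_3) h H :
  moderate_equiv r r' V W U0 h H -> nbhdS2 (LBS r' W) Ut ->
  exists N : set ('rV[R]_n * 'rV[R]_3), [/\ open N, zeroX (LBS r V) `<=` N &
    forall p, N p -> S2 p.2 -> U0 p.2 /\ Ut (H p.1 p.2)].
Proof.
case=> _ _ _ [_ [_ pullback]] _ [_ [Ot [oOt LBS_Ot OtUt]]].
have [|N [oN LBS_N N_Ut]] := pullback [set q | Ut q.2].
  exists [set q | Ot q.2]; split => [||q [Otq S2q]]; last exact: OtUt.
  - by apply: open_comp oOt => q _; exact: cvg_snd.
  - by move=> q [_ LBSq]; exact: LBS_Ot.
by exists N; split => // p Np S2p; have [[_ U0p] Utp] := N_Ut p (conj Np S2p).
Qed.

Theorem mainTheorem11 (R : realType) (n n' : nat) (r r' : R)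
  (V : 'rV[R]_n -> 'rV[R]_3 -> 'rV[R]_3) (W : 'rV[R]_n' -> 'rV[R]_3 -> 'rV[R]_3)
  (Hhat : 'rV[R]_3 -> 'rV[R]_3) (U0 : set 'rV[R]_3)
  (h : 'rV[R]_n -> 'rV[R]_n') (H : 'rV[R]_n -> 'rV[R]_3 -> 'rV[R]_3) :
  smooth_family r V -> smooth_family r' W ->
  orb_equiv (V 0) (W 0) Hhat ->
  nbhdS2 (LBS r V) U0 ->
  moderate_equiv r r' V W U0 h H ->
  (forall x, U0 x -> Hhat x = H 0 x) ->
  forall Ut : set 'rV[R]_3, nbhdS2 (LBS r' W) Ut ->
  exists U : set 'rV[R]_3,
    [/\ openS2 U, LBS r V `<=` U, U `<=` U0 &
        exists d : R, 0 < d /\ forall e : 'rV[R]_n, `|e| < d -> H e @` U `<=` Ut].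
Proof.
move=> [r0 _ vsV] _ _ _ modVW _ Ut nbhdUt.
have [N [oN LBS_N N_Ut]] := moderate_equiv_pullback modVW nbhdUt.
have cLBS : compact (LBS r V) := compact_LBS (vsV 0 (ballxx 0 r0)).
have [d d0 tubeN] := tube_ball cLBS oN (fun x LBSx => LBS_N (0, x) (conj erefl LBSx)).
exists (S2_thickening (LBS r V) d); split.
- exact: openS2_thickening.
- by apply: sub_S2_thickening => // x [/ELBS_sub_S2].
- move=> y [S2y [x LBSx dxy]].
  by have [] := N_Ut (0, y) (tubeN _ _ _ LBSx (ballxx 0 d0) dxy) S2y.
- exists d; split => // e e_lt_d _ [y [S2y [x LBSx dxy]] <-].
  have d0e : ball 0 d e by rewrite -ball_normE /ball_ /= sub0r normrN.
  by have [] := N_Ut (e, y) (tubeN _ _ _ LBSx d0e dxy) S2y.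
Qed.
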